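(* Let $P$ be a poset with $n$ elements that has a unique minimal element, and suppose this minimal element is covered by exactly one element. Then $P$ has exactly $2(n-1)!-(n-2)!$ quasi-tangled labelings.
   Context: A labeling is a bijection $L:P\to[n]$; it is a linear extension if $x<_P y$ implies $L(x)<L(y)$. Promotion $\partial$: for non-maximal $x$, the $L$-successor of $x$ is the element greater than $x$ with minimal label; the promotion chain is $v_1=L^{-1}(1)$, $v_{i+1}$ the $L$-successor of $v_i$, ending at the first maximal $v_m$; $\partial(L)(x)=L(x)-1$ off the chain, $\partial(L)(v_i)=L(v_{i+1})-1$ for $i<m$, $\partial(L)(v_m)=n$. The sorting time of $L$ is the least $k\ge0$ with $\partial^k(L)$ a linear extension; $L$ is quasi-tangled if its sorting time is $n-2$. *)

From HB Require Import structures.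
From mathcomp Require Import all_boot all_order.
Set Implicit Arguments. Unset Strict Implicit. Unset Printing Implicit Defensive.
Import Order.TTheory.
Local Open Scope order_scope.

(* Labels are 0-based: a labeling L : P -> nat is a bijection onto
   {0,...,n-1}, label k here standing for label k+1 of the paper. *)

Section Promotion.
Variables (d : Order.disp_t) (P : finPOrderType d).

Definition minimal (x : P) : bool := [forall y : P, ~~ (y < x)].
Definition maximal (x : P) : bool := [forall y : P, ~~ (x < y)].
Definition covers (x y : P) : bool :=
  (x < y) && [forall z : P, ~~ ((x < z) && (z < y))].

Definition is_linext (L : P -> nat) : bool :=
  [forall x : P, forall y : P, (x < y) ==> (L x < L y)%N].

Definition lsucc (L : P -> nat) (x : P) : option P :=
  [pick y : P | (x < y) && [forall z : P, (x < z) ==> (L y <= L z)%N]].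

Fixpoint chain_from (L : P -> nat) (fuel : nat) (x : P) : seq P :=
  match fuel with
  | 0 => [:: x]
  | f.+1 => if maximal x then [:: x] else
            match lsucc L x with
            | None => [:: x]
            | Some y => x :: chain_from L f y
            end
  end.

Definition prom_chain (L : P -> nat) : seq P :=
  match [pick x : P | L x == 0%N] with
  | None => [::]
  | Some v1 => chain_from L #|P| v1
  end.

Definition promotion (L : P -> nat) : P -> nat := fun x =>
  let c := prom_chain L in
  if x \in c then
    let i := index x c in
    if (i.+1 < size c)%N then (L (nth x c i.+1)).-1 else (#|P|).-1
  else (L x).-1.

Definition has_sorting_time (L : P -> nat) (k : nat) : bool :=
  is_linext (iter k promotion L) &&
  [forall j : 'I_k, ~~ is_linext (iter j promotion L)].

Definition quasi_tangled (L : P -> nat) : bool :=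
  has_sorting_time L (#|P| - 2).

End Promotion.

From HB Require Import structures.
From mathcomp Require Import all_boot all_order.
From mathcomp Require Import perm zify.
Set Implicit Arguments. Unset Strict Implicit. Unset Printing Implicit Defensive.
Import Order.TTheory.

(* Every element other than the minimum [x0] and its unique cover [x1] lies
   above [x1].  Under promotion the labels (a, b) of (x0, x1) evolve on their
   own: a decreases by one, and so does b unless x0 or x1 starts the promotion
   chain; the pair first becomes (0, 1) after [bottom_delay a b] steps
   (b - 1 if a < b, a otherwise).  Independently, k promotions of any labeling
   respect every relation x < y with x labelled at least n - k, and for
   k >= n - 3 this leaves only x0 and x1 to check.  Hence a labeling is
   quasi-tangled iff [bottom_delay a b = n - 2], i.e. iff b = n - 1 or
   a = n - 2, and inclusion-exclusion over these two fibres gives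
   2 (n-1)! - (n-2)!. *)

Section InjectiveFibers.
Variables (D : finType) (n : nat).
Implicit Types (x y : D) (a b : 'I_n) (L : {ffun D -> 'I_n}).

Definition inj_fiber x a := [set L : {ffun D -> 'I_n} | injectiveb L & L x == a].

Definition relabel a b L : {ffun D -> 'I_n} := [ffun x => tperm a b (L x)].

Lemma relabelK a b : involutive (relabel a b).
Proof. by move=> L; apply/ffunP => x; rewrite !ffunE tpermK. Qed.

Lemma injectiveb_relabel a b L : injectiveb (relabel a b L) = injectiveb L.
Proof.
apply/injectiveP/injectiveP => injL x y; last by rewrite !ffunE => /perm_inj /injL.
by move=> Lxy; apply: injL; rewrite !ffunE Lxy.
Qed.

Lemma card_inj_fiber_le x a b : #|inj_fiber x a| <= #|inj_fiber x b|.
Proof.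
rewrite -(card_imset _ (inv_inj (relabelK a b))).
apply: subset_leq_card; apply/subsetP => ? /imsetP[L + ->]; rewrite !inE => /andP[injL /eqP Lx].
by rewrite injectiveb_relabel injL ffunE Lx tpermL eqxx.
Qed.

Lemma card_inj_fiber2_le x y a b b' : b != a -> b' != a ->
  #|inj_fiber x a :&: inj_fiber y b| <= #|inj_fiber x a :&: inj_fiber y b'|.
Proof.
move=> ba b'a; rewrite -(card_imset _ (inv_inj (relabelK b b'))).
apply: subset_leq_card; apply/subsetP => ? /imsetP[L + ->].
rewrite !inE => /andP[/andP[injL /eqP Lx] /andP[_ /eqP Ly]].
by rewrite injectiveb_relabel injL !ffunE Lx Ly tpermL tpermD // !eqxx.
Qed.

Lemma card_inj_fiber_sum x :
  #|[set L : {ffun D -> 'I_n} | injectiveb L]| = \sum_a #|inj_fiber x a|.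
Proof.
rewrite -sum1_card (partition_big (fun L => L x) xpredT) //=.
by apply: eq_bigr => a _; rewrite -sum1_card; apply: eq_bigl => L; rewrite !inE.
Qed.

Lemma card_inj_fiber2_sum x y a :
  #|inj_fiber x a| = \sum_b #|inj_fiber x a :&: inj_fiber y b|.
Proof.
rewrite -sum1_card (partition_big (fun L => L y) xpredT) //=.
apply: eq_bigr => b _; rewrite -sum1_card; apply: eq_bigl => L.
by rewrite !inE; case: (injectiveb L).
Qed.

Lemma mul_fact_cancel m k : 0 < m -> m * k = m`! -> k = m.-1`!.
Proof. by case: m => // m _; rewrite factS => /eqP; rewrite eqn_mul2l => /eqP. Qed.

Hypothesis card_D : #|D| = n.

Lemma card_inj_fiber x a : #|inj_fiber x a| = n.-1`!.
Proof.
have := card_inj_fiber_sum x; rewrite card_inj_ffuns card_ord card_D ffactnn.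
rewrite (eq_bigr (fun=> #|inj_fiber x a|)) => [|b _]; last first.
  by apply/eqP; rewrite eqn_leq !card_inj_fiber_le.
rewrite sum_nat_const card_ord => /esym; apply: mul_fact_cancel.
exact: leq_ltn_trans (leq0n a) (ltn_ord a).
Qed.

Lemma card_inj_fiber2 x y a b : x != y -> b != a ->
  #|inj_fiber x a :&: inj_fiber y b| = n.-2`!.
Proof.
move=> xy ba; have := card_inj_fiber2_sum x y a; rewrite card_inj_fiber (bigD1 a) //=.
have -> : #|inj_fiber x a :&: inj_fiber y a| = 0.
  apply/eqP; rewrite cards_eq0; apply/eqP/setP => L; rewrite !inE.
  apply/negP => /andP[/andP[/injectiveP injL /eqP Lx] /andP[_ /eqP Ly]].
  by move: xy; rewrite (injL x y) ?eqxx // Lx Ly.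
rewrite (eq_bigr (fun=> #|inj_fiber x a :&: inj_fiber y b|)) => [|b' b'a]; last first.
  by apply/eqP; rewrite eqn_leq !card_inj_fiber2_le.
rewrite add0n sum_nat_const cardC1 card_ord.
move=> /esym; apply: mul_fact_cancel.
by have := ltn_ord a; have := ltn_ord b; have : (b : nat) != a by []; lia.
Qed.

Lemma card_inj_fiberU x y a b : x != y -> b != a ->
  #|inj_fiber x a :|: inj_fiber y b| = 2 * n.-1`! - n.-2`!.
Proof.
move=> xy ba; rewrite cardsU !card_inj_fiber card_inj_fiber2 //.
by rewrite mul2n addnn.
Qed.

End InjectiveFibers.

Section Promotion.
Variables (d : Order.disp_t) (P : finPOrderType d).
Implicit Types (x y z w : P) (L : P -> nat).

Lemma lsuccP L x y : lsucc L x = Some y ->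
  (x < y)%O /\ forall z, (x < z)%O -> L y <= L z.
Proof.
rewrite /lsucc; case: pickP => // y' /andP[xy' /forallP miny'] [<-].
by split=> // z; apply/implyP.
Qed.

Lemma lsucc_min L x w : injective L -> (x < w)%O ->
  (forall z, (x < z)%O -> L w <= L z) -> lsucc L x = Some w.
Proof.
move=> injL xw minw; rewrite /lsucc; case: pickP => [y /andP[xy /forallP miny]|].
  congr Some; apply: injL; apply/eqP; rewrite eqn_leq minw // andbT.
  exact: implyP (miny w) xw.
move=> /(_ w); rewrite xw /=; move/negP; case; apply/forallP => z; apply/implyP.
exact: minw.
Qed.

Lemma lsucc_exists L x : ~~ maximal x -> exists y, lsucc L x = Some y.
Proof.
move=> /forallPn[z]; rewrite negbK => xz.
case: (arg_minnP (fun y => L y) xz) => y xy miny.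
rewrite /lsucc; case: pickP => [y' _|/(_ y)]; first by exists y'.
rewrite xy /=; move/negP; case; apply/forallP => w; apply/implyP; exact: miny.
Qed.

Lemma chain_fromP L f x (c := chain_from L f x) :
  [/\ 0 < size c <= f.+1, nth x c 0 = x,
      (forall i, i.+1 < size c -> lsucc L (nth x c i) = Some (nth x c i.+1)) &
      maximal (last x c) \/ size c = f.+1].
Proof.
rewrite {}/c; elim: f x => [|f IH] x /=; first by split => //; right.
case: ifP => maxx /=; first by split => //; left.
have [y xy] := lsucc_exists L (negbT maxx); rewrite xy.
have [/andP[c_gt0 c_le] c_head c_step c_end] := IH y.
split => //=.
- case=> [|i] /=; first by move=> _; rewrite (set_nth_default y) // c_head.
  rewrite ltnS => ci; rewrite (set_nth_default y) ?c_step //; last by lia.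
  by rewrite (set_nth_default y x).
- case: c_end => [maxc|->]; last by right.
  by left; move: maxc; case: (chain_from L f y) c_head c_gt0 => //= u s ->.
Qed.

Definition labeling L := injective L /\ forall x, L x < #|P|.

Lemma labeling_onto L i : labeling L -> i < #|P| -> exists x, L x = i.
Proof.
move=> [injL L_lt] i_lt; pose f x := Ordinal (L_lt x).
have injf : injective f by move=> x y /(congr1 val) /injL.
have := inj_card_onto injf (eq_leq (card_ord _)) (Ordinal i_lt).
by case/codomP => x /(congr1 val) /= ->; exists x.
Qed.

Definition linext_from j L := forall x y, (x < y)%O -> j <= L x -> L x < L y.

Lemma linext_from_le i j L : i <= j -> linext_from i L -> linext_from j L.
Proof. by move=> ij Li x y xy jx; apply: Li => //; apply: leq_trans jx. Qed.

Section Chain.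
Variables (L : P -> nat) (v1 : P).
Hypotheses (labL : labeling L) (Lv1 : L v1 = 0).
Let injL := labL.1.
Local Notation c := (prom_chain L).

Lemma prom_chainE : c = chain_from L #|P| v1.
Proof.
rewrite /prom_chain; case: pickP => [v /eqP Lv|/(_ v1)]; last by rewrite Lv1 eqxx.
by rewrite (injL (etrans Lv (esym Lv1))).
Qed.

Lemma label_gt0 x : x != v1 -> 0 < L x.
Proof.
by apply: contraNT; rewrite lt0n negbK => /eqP Lx; rewrite (injL (etrans Lx (esym Lv1))).
Qed.

Lemma size_chain_gt0 : 0 < size c.
Proof. by rewrite prom_chainE; case: (chain_fromP L #|P| v1) => /andP[]. Qed.

Lemma nth_chain0 : nth v1 c 0 = v1.
Proof. by rewrite prom_chainE; case: (chain_fromP L #|P| v1). Qed.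

Lemma chain_step i : i.+1 < size c -> lsucc L (nth v1 c i) = Some (nth v1 c i.+1).
Proof. by rewrite prom_chainE; case: (chain_fromP L #|P| v1) => _ _ step _; apply: step. Qed.

Lemma chain_sorted : sorted (fun x y => (x < y)%O) c.
Proof. by apply/(sortedP v1) => i /chain_step /lsuccP[]. Qed.

Lemma chain_uniq : uniq c.
Proof. exact: (sorted_uniq (@lt_trans _ _) (@ltxx _ _) chain_sorted). Qed.

Lemma chain_lt i j : i < j -> j < size c -> (nth v1 c i < nth v1 c j)%O.
Proof.
move=> ij jc; apply: (sorted_ltn_nth (@lt_trans _ _) v1 chain_sorted) => //.
by rewrite inE (ltn_trans ij jc).
Qed.

Lemma nth_chain_eq0 i : i < size c -> (nth v1 c i == v1) = (i == 0).
Proof. by move=> ic; have := nth_uniq v1 ic size_chain_gt0 chain_uniq; rewrite nth_chain0. Qed.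

Lemma chain_last_maximal : maximal (last v1 c).
Proof.
have := chain_uniq; rewrite prom_chainE; case: (chain_fromP L #|P| v1) => _ _ _ [//|c_size].
move/card_uniqP; rewrite c_size => c_card.
by have := max_card (mem (chain_from L #|P| v1)); rewrite c_card ltnn.
Qed.

Lemma mem_chain_v1 : v1 \in c.
Proof. by rewrite -{1}nth_chain0 mem_nth // size_chain_gt0. Qed.

(* The promotion chain read cyclically: its last element is followed by [v1]. *)
Definition chain_next x := if x \in c then nth v1 c (index x c).+1 else x.

Definition shift_label z := if z == v1 then #|P|.-1 else (L z).-1.

Lemma promotionE x : promotion L x = shift_label (chain_next x).
Proof.
rewrite /promotion /chain_next /shift_label; case: ifP => xc; last first.
  by rewrite ifF //; apply: contraFF xc => /eqP->; apply: mem_chain_v1.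
case: ltnP => ic; last by rewrite nth_default ?eqxx.
by rewrite nth_chain_eq0 // (set_nth_default v1).
Qed.

Lemma chain_next_notin x : x \notin c -> chain_next x = x.
Proof. by rewrite /chain_next => /negbTE->. Qed.

Lemma chain_next_mem x : x \in c -> chain_next x \in c.
Proof.
move=> xc; rewrite /chain_next xc.
case: (ltnP (index x c).+1 (size c)) => [i_next|i_last]; first exact: mem_nth.
by rewrite nth_default // mem_chain_v1.
Qed.

Lemma index_chain_next x : x \in c ->
  index (chain_next x) c = if (index x c).+1 == size c then 0 else (index x c).+1.
Proof.
move=> xc; have := index_mem x c; rewrite /chain_next xc => ic.
case: eqP => [i_last|/eqP i_last].
  by rewrite nth_default ?i_last // -{1}nth_chain0 index_uniq ?chain_uniq ?size_chain_gt0.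
by rewrite index_uniq ?chain_uniq // ltn_neqAle i_last ic.
Qed.

Lemma chain_next_inj : injective chain_next.
Proof.
move=> x y; case: (boolP (x \in c)) => xc; case: (boolP (y \in c)) => yc.
- move=> nxy; rewrite -(nth_index v1 xc) -(nth_index v1 yc); congr nth.
  have := congr1 (index^~ c) nxy; rewrite !index_chain_next //.
  have := index_mem x c; have := index_mem y c; rewrite xc yc.
  by do 2 case: eqP; lia.
- by move=> nxy; have := chain_next_mem xc; rewrite nxy chain_next_notin // (negbTE yc).
- by move=> nxy; have := chain_next_mem yc; rewrite -nxy chain_next_notin // (negbTE xc).
- by rewrite !chain_next_notin.
Qed.

Lemma chain_next_eq_v1 x : (chain_next x == v1) = (x \in c) && maximal x.
Proof.
case: (boolP (x \in c)) => xc /=; last first.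
  by rewrite chain_next_notin //; apply: contraNF xc => /eqP->; apply: mem_chain_v1.
have ic : index x c < size c by rewrite index_mem.
rewrite /chain_next xc; case: (ltnP (index x c).+1 (size c)) => [i_next|i_last].
  rewrite nth_chain_eq0 //; apply/esym/negbTE/forallPn; exists (nth v1 c (index x c).+1).
  by rewrite negbK -{1}(nth_index v1 xc) chain_lt.
have last_x : (size c).-1 = index x c by lia.
by rewrite nth_default // eqxx; have := chain_last_maximal; rewrite -nth_last last_x nth_index.
Qed.

Lemma index_next_lt x : x \in c -> ~~ maximal x -> (index x c).+1 < size c.
Proof.
move=> xc; rewrite ltnNge; apply: contra => i_last.
by have := chain_next_eq_v1 x; rewrite /chain_next xc nth_default // eqxx.
Qed.

Lemma chain_next_lsucc x y : x \in c -> lsucc L x = Some y -> chain_next x = y.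
Proof.
move=> xc xy; have [lt_xy _] := lsuccP xy.
have i_next : (index x c).+1 < size c.
  by apply: index_next_lt => //; apply/forallPn; exists y; rewrite negbK.
by have := chain_step i_next; rewrite nth_index // xy => -[->]; rewrite /chain_next xc.
Qed.

Lemma chain_next_lt x : x \in c -> ~~ maximal x -> (x < chain_next x)%O.
Proof.
move=> xc /(lsucc_exists L)[y xy].
by rewrite (chain_next_lsucc xc xy); case: (lsuccP xy).
Qed.

Lemma chain_pred y : y \in c -> y != v1 -> exists2 x, x \in c & lsucc L x = Some y.
Proof.
move=> yc; rewrite -(nth_index v1 yc) nth_chain_eq0 ?index_mem //.
case E: (index y c) => [//|i] _; have i_next : i.+1 < size c by rewrite -E index_mem.
by exists (nth v1 c i); [rewrite mem_nth // ltnW | rewrite chain_step].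
Qed.

Lemma promotion_notin x : x \notin c -> promotion L x = (L x).-1.
Proof.
move=> xc; rewrite promotionE chain_next_notin // /shift_label ifF //.
by apply: contraNF xc => /eqP->; apply: mem_chain_v1.
Qed.

Lemma promotion_lsucc x y : x \in c -> lsucc L x = Some y -> promotion L x = (L y).-1.
Proof.
move=> xc xy; have [lt_xy _] := lsuccP xy.
rewrite promotionE /shift_label -(chain_next_lsucc xc xy) chain_next_eq_v1 xc /=.
by rewrite ifF //; apply/negbTE/forallPn; exists y; rewrite negbK.
Qed.

Lemma promotion_maximal x : x \in c -> maximal x -> promotion L x = #|P|.-1.
Proof. by move=> xc maxx; rewrite promotionE /shift_label chain_next_eq_v1 xc maxx. Qed.

Lemma shift_label_inj : injective shift_label.
Proof.
move=> z w; have := labL.2 z; have := labL.2 w; rewrite /shift_label.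
case: (eqVneq z v1) => [->|zv1]; case: (eqVneq w v1) => [->|wv1] //.
- by have := label_gt0 wv1; lia.
- by have := label_gt0 zv1; lia.
- by have := label_gt0 zv1; have := label_gt0 wv1 => ? ? ? ? ?; apply: injL; lia.
Qed.

Lemma promotion_labeling : labeling (promotion L).
Proof.
split=> [x y|x]; first by rewrite !promotionE => /shift_label_inj/chain_next_inj.
rewrite promotionE /shift_label; have := labL.2 (chain_next x); have := labL.2 v1.
by case: ifP => _; lia.
Qed.

Lemma chain_next_mono x y : (x < y)%O -> chain_next x != v1 -> chain_next y != v1 ->
  (chain_next x < chain_next y)%O \/ L (chain_next x) < L (chain_next y).
Proof.
move=> xy; rewrite !chain_next_eq_v1.
case: (boolP (x \in c)) => xc; case: (boolP (y \in c)) => yc //= nmaxx nmaxy.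
- left; rewrite -(nth_index v1 xc) -(nth_index v1 yc) in xy.
  have [ix iy] := (index_mem x c, index_mem y c); rewrite xc yc in ix iy.
  have ixy : index x c < index y c.
    rewrite ltnNge; apply/negP; rewrite leq_eqVlt => /orP[/eqP E|lt_yx].
      by move: xy; rewrite E ltxx.
    by have := lt_asym (nth v1 c (index x c)) (nth v1 c (index y c)); rewrite xy chain_lt.
  by rewrite /chain_next xc yc chain_lt // index_next_lt.
- right; have [u xu] := lsucc_exists L nmaxx; have [_ minu] := lsuccP xu.
  rewrite (chain_next_lsucc xc xu) (chain_next_notin yc) ltn_neqAle minu // andbT.
  apply: contraNN yc => /eqP/injL <-; rewrite -(chain_next_lsucc xc xu); exact: chain_next_mem.
- by left; rewrite (chain_next_notin xc); apply: lt_trans xy (chain_next_lt yc nmaxy).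
- by left; rewrite !chain_next_notin.
Qed.

Lemma promotion_linext_from j : 0 < j -> linext_from j L -> linext_from j.-1 (promotion L).
Proof.
move=> j_gt0 Lj x y xy; rewrite !promotionE /shift_label.
case: (eqVneq (chain_next x) v1) => [/eqP|nx_v1].
  by rewrite chain_next_eq_v1 => /andP[_ /forallP/(_ y)]; rewrite xy.
have := label_gt0 nx_v1; have := labL.2 (chain_next x).
case: (eqVneq (chain_next y) v1) => [_|ny_v1]; first by lia.
have := label_gt0 ny_v1 => ? ? ? jx.
have : L (chain_next x) < L (chain_next y).
  by case: (chain_next_mono xy nx_v1 ny_v1) => // /Lj; apply; lia.
lia.
Qed.

End Chain.

Lemma iter_promotion_labeling L k : labeling L -> k <= #|P| ->
  labeling (iter k (@promotion _ P) L) /\ linext_from (#|P| - k) (iter k (@promotion _ P) L).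
Proof.
move=> labL; elim: k => [_|k IH k_lt].
  by split=> // x y _; rewrite subn0 leqNgt labL.2.
have [labLk Lk] := IH (ltnW k_lt).
have [v1 Lv1] := labeling_onto labLk (leq_ltn_trans (leq0n k) k_lt).
rewrite iterS; split; first exact: promotion_labeling labLk Lv1.
by rewrite subnS; apply: (promotion_linext_from labLk Lv1) Lk; rewrite subn_gt0.
Qed.

Lemma ex_minimal_in (Q : pred P) y : Q y ->
  exists2 z, Q z & forall w, (w < z)%O -> ~~ Q w.
Proof.
move=> Qy; pose down z := #|[set w : P | (w < z)%O]|.
case: (arg_minnP down Qy) => z Qz minz; exists z => // w wz; apply/negP => Qw.
have := minz w Qw; rewrite leqNgt; apply/negP; rewrite negbK.
apply: proper_card; apply/properP; split.
  by apply/subsetP => u; rewrite !inE => uw; apply: lt_trans uw wz.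
by exists w; rewrite !inE ?wz ?ltxx.
Qed.

Lemma unique_minimal_lt x0 : (forall y, minimal y <-> y = x0) ->
  forall y, y != x0 -> (x0 < y)%O.
Proof.
move=> minE y yx0; have [z zy minz] := ex_minimal_in (Q := fun z => (z <= y)%O) (lexx y).
have zx0 : z = x0.
  apply/minE/forallP => w; apply/negP => wz.
  by have := minz w wz; rewrite (le_trans (ltW wz) zy).
by rewrite -zx0 in yx0 *; rewrite lt_neqAle eq_sym yx0 zy.
Qed.

Lemma unique_cover_lt x0 x1 : (forall y, y != x0 -> (x0 < y)%O) ->
  (forall z, covers x0 z -> z = x1) -> forall y, y != x0 -> y != x1 -> (x1 < y)%O.
Proof.
move=> lt_x0 cov1 y yx0 yx1; have Qy : (x0 < y)%O && (y <= y)%O by rewrite lt_x0 ?lexx.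
have [z /andP[x0z zy] minz] := ex_minimal_in (Q := fun z => (x0 < z)%O && (z <= y)%O) Qy.
have zx1 : z = x1.
  apply/cov1; rewrite /covers x0z; apply/forallP => w; apply/negP => /andP[x0w wz].
  by have := minz w wz; rewrite x0w (le_trans (ltW wz) zy).
by rewrite -zx1 in yx1 *; rewrite lt_neqAle eq_sym yx1 zy.
Qed.

Definition next_x1_label a b :=
  if b == 0 then nat_of_bool (a == 1) else if (a == 0) && (b == 1) then 1 else b.-1.

(* After [bottom_delay (L x0) (L x1)] promotions, [x0] and [x1] carry the labels 0 and 1. *)
Definition bottom_delay a b := if a < b then b.-1 else a.

Lemma bottom_delay_next a b : a != b ->
  bottom_delay a.-1 (next_x1_label a b) = (bottom_delay a b).-1.
Proof.
rewrite /bottom_delay /next_x1_label.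
by case: a => [|[|a]]; case: b => [|[|b]] //= _; repeat case: ifP => ?; lia.
Qed.

Lemma bottom_delay_eq0 a b : a != b -> (bottom_delay a b == 0) = (a == 0) && (b == 1).
Proof. by rewrite /bottom_delay; case: a => [|[|a]]; case: b => [|[|b]] //= _; case: ifP; lia. Qed.

Section TwoBottom.
Variables x0 x1 : P.
Hypotheses (lt_x0 : forall y, y != x0 -> (x0 < y)%O)
  (lt_x1 : forall y, y != x0 -> y != x1 -> (x1 < y)%O) (x1_neq_x0 : x1 != x0).

Lemma above_x1 z : (x1 < z)%O -> (z != x0) && (z != x1).
Proof.
move=> x1z; apply/andP; split; apply: contraTneq x1z => ->; last by rewrite ltxx.
by rewrite lt_gtF ?lt_x0.
Qed.

Lemma card_gt1 : 1 < #|P|.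
Proof.
have/card_uniqP s_card : uniq [:: x0; x1] by rewrite /= inE eq_sym x1_neq_x0.
by have := max_card (mem [:: x0; x1]); rewrite s_card.
Qed.

Lemma maximal_x1E : maximal x1 = (#|P| == 2).
Proof.
apply/idP/idP => [/forallP maxx1|/eqP card2].
  have : [set: P] \subset [set x0; x1].
    apply/subsetP => y _; rewrite !inE; case: (eqVneq y x0) => //= yx0.
    by apply: contraT => yx1; have := maxx1 y; rewrite lt_x1.
  by move/subset_leq_card; rewrite cardsT cards2 eq_sym x1_neq_x0 eqn_leq card_gt1 andbT.
apply/forallP => z; apply/negP => /above_x1/andP[zx0 zx1].
have/card_uniqP s_card : uniq [:: x0; x1; z].
  by rewrite /= !inE !negb_or eq_sym x1_neq_x0 !(eq_sym _ z) zx0 zx1.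
by have := max_card (mem [:: x0; x1; z]); rewrite s_card card2.
Qed.

Section Step.
Variables (L : P -> nat) (v1 : P).
Hypotheses (labL : labeling L) (Lv1 : L v1 = 0).
Let injL := labL.1.
Local Notation c := (prom_chain L).

Lemma lsucc_x0 w : L x0 = 0 -> L w = 1 -> lsucc L x0 = Some w.
Proof.
move=> Lx0 Lw; apply: lsucc_min injL _ _.
  by apply: lt_x0; rewrite -(inj_eq injL) Lw Lx0.
move=> z x0z; rewrite Lw lt0n -Lx0 (inj_eq injL).
by apply: contraTneq x0z => ->; rewrite ltxx.
Qed.

Lemma lsucc_x1 m w : L w = m -> m != L x0 -> m != L x1 ->
  (forall k, k < m -> (k == L x0) || (k == L x1)) -> lsucc L x1 = Some w.
Proof.
move=> Lw mx0 mx1 below; apply: lsucc_min injL _ _.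
  by apply: lt_x1; rewrite -(inj_eq injL) Lw.
move=> z x1z; rewrite Lw leqNgt; apply/negP => /below; rewrite !(inj_eq injL).
by have /andP[/negbTE-> /negbTE->] := above_x1 x1z.
Qed.

Lemma x0_in_chainE : (x0 \in c) = (L x0 == 0).
Proof.
apply/idP/eqP => [x0c|Lx0]; last by rewrite (injL (etrans Lx0 (esym Lv1))) mem_chain_v1.
case: (eqVneq x0 v1) => [->//|x0v1].
have [x _ /lsuccP[x_x0 _]] := chain_pred labL Lv1 x0c x0v1.
by have := lt_asym x x0; rewrite x_x0 lt_x0 ?(lt_eqF x_x0).
Qed.

Lemma x1_in_chainE : (x1 \in c) = (L x1 == 0) || (L x0 == 0) && (L x1 == 1).
Proof.
apply/idP/idP => [x1c|].
  case: (eqVneq x1 v1) => [->|x1v1]; first by rewrite Lv1.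
  have [x xc /lsuccP[x_x1 minx1]] := chain_pred labL Lv1 x1c x1v1.
  have xx0 : x = x0.
    apply: contraTeq x_x1 => xx0; apply/negP => x_x1.
    by have := lt_asym x x1; rewrite x_x1 lt_x1 ?(lt_eqF x_x1).
  have /eqP Lx0 : L x0 == 0 by rewrite -x0_in_chainE -xx0.
  have [w Lw] := labeling_onto labL card_gt1.
  have : L x1 <= 1 by rewrite -Lw minx1 // xx0 lt_x0 // -(inj_eq injL) Lw Lx0.
  have : L x1 != 0 by rewrite -Lx0 (inj_eq injL).
  by rewrite Lx0; lia.
case/orP => [/eqP Lx1|/andP[/eqP Lx0 /eqP Lx1]].
  by rewrite (injL (etrans Lx1 (esym Lv1))) mem_chain_v1.
have x0c : x0 \in c by rewrite x0_in_chainE Lx0.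
by rewrite -(chain_next_lsucc labL Lv1 x0c (lsucc_x0 Lx0 Lx1)) chain_next_mem.
Qed.

Lemma promotion_x0 : promotion L x0 = (L x0).-1.
Proof.
case: (boolP (x0 \in c)) => x0c; last exact: (promotion_notin labL Lv1 x0c).
have /eqP Lx0 : L x0 == 0 by rewrite -x0_in_chainE.
have [w Lw] := labeling_onto labL card_gt1.
by rewrite (promotion_lsucc labL Lv1 x0c (lsucc_x0 Lx0 Lw)) Lw Lx0.
Qed.

Lemma promotion_x1_in m : x1 \in c -> m != L x0 -> m != L x1 ->
  (forall k, k < m -> (k == L x0) || (k == L x1)) -> promotion L x1 = m.-1.
Proof.
move=> x1c mx0 mx1 below; have x01 : L x0 != L x1 by rewrite (inj_eq injL) eq_sym.
have m_le2 : m <= 2 by have := below 0; have := below 1; have := below 2; lia.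
case: (boolP (maximal x1)) => maxx1.
  rewrite (promotion_maximal labL Lv1 x1c maxx1); move: maxx1; rewrite maximal_x1E => /eqP n2.
  by have := labL.2 x0; have := labL.2 x1; rewrite n2; lia.
have m_lt : m < #|P| by move: maxx1; rewrite maximal_x1E; have := card_gt1; lia.
have [w Lw] := labeling_onto labL m_lt.
by rewrite (promotion_lsucc labL Lv1 x1c (lsucc_x1 Lw mx0 mx1 below)) Lw.
Qed.

Lemma promotion_x1 : promotion L x1 = next_x1_label (L x0) (L x1).
Proof.
rewrite /next_x1_label; case: (boolP (x1 \in c)) => x1c; last first.
  move: (x1c); rewrite x1_in_chainE negb_or => /andP[/negbTE-> /negbTE->].
  exact: (promotion_notin labL Lv1 x1c).
move: (x1c); rewrite x1_in_chainE => /orP[/eqP Lx1|/andP[/eqP Lx0 /eqP Lx1]].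
  case: (eqVneq (L x0) 1) => [Lx0|Lx0_ne1].
    by rewrite Lx1 Lx0 (promotion_x1_in (m := 2)) ?Lx1 ?Lx0 // => -[|[|]].
  rewrite Lx1 (promotion_x1_in (m := 1)) ?Lx1 ?(eq_sym 1) //.
  by case=> // _; rewrite orbT.
by rewrite Lx0 Lx1 (promotion_x1_in (m := 2)) ?Lx0 ?Lx1 // => -[|[|]].
Qed.

End Step.

Local Notation iprom k L := (iter k (@promotion _ P) L).

Lemma linext_bottom L : labeling L -> is_linext L -> (L x0 == 0) && (L x1 == 1).
Proof.
move=> [injL L_lt] /forallP linL.
have L_mono x y : (x < y)%O -> L x < L y by apply/implyP/(forallP (linL x)).
have [w Lw] := labeling_onto (conj injL L_lt) (ltn_trans (ltn0Sn 0) card_gt1).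
have Lx0 : L x0 = 0.
  by case: (eqVneq w x0) => [<-//|/lt_x0/L_mono]; rewrite Lw.
have [w' Lw'] := labeling_onto (conj injL L_lt) card_gt1.
case: (eqVneq w' x1) => [<-|w'x1]; first by rewrite Lx0 Lw' !eqxx.
have w'x0 : w' != x0 by rewrite -(inj_eq injL) Lw' Lx0.
have := L_mono _ _ (lt_x1 w'x0 w'x1); rewrite Lw' ltnS leqn0 -Lx0 (inj_eq injL).
by rewrite (negbTE x1_neq_x0).
Qed.

Lemma linext_of_bottom L : labeling L -> linext_from 3 L -> L x0 = 0 -> L x1 = 1 ->
  is_linext L.
Proof.
move=> [injL _] L3 Lx0 Lx1; apply/forallP => x; apply/forallP => y; apply/implyP => xy.
have Lxy : L x != L y by rewrite (inj_eq injL) (lt_eqF xy).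
have above z : (x1 < z)%O -> (L z != 0) && (L z != 1).
  by move=> /above_x1; rewrite -Lx1 -Lx0 !(inj_eq injL).
case: (eqVneq x x0) => [xx0|xx0]; first by move: Lxy; rewrite xx0 Lx0; lia.
case: (eqVneq x x1) => [xx1|xx1].
  by rewrite xx1 in xy *; have := above _ xy; rewrite Lx1; lia.
have x1x := lt_x1 xx0 xx1; have := above _ x1x; have := above _ (lt_trans x1x xy).
by case: (leqP 3 (L x)) => [/(L3 _ _ xy)//|]; lia.
Qed.

Lemma iprom_neq L k : labeling L -> k <= #|P| -> iprom k L x0 != iprom k L x1.
Proof.
move=> labL k_le; have [[injLk _] _] := iter_promotion_labeling labL k_le.
by rewrite (inj_eq injLk) eq_sym.
Qed.

Lemma iter_promotion_bottom L k : labeling L -> k < #|P| ->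
  iprom k.+1 L x0 = (iprom k L x0).-1 /\
  iprom k.+1 L x1 = next_x1_label (iprom k L x0) (iprom k L x1).
Proof.
move=> labL k_lt; have [labLk _] := iter_promotion_labeling labL (ltnW k_lt).
have [v1 Lv1] := labeling_onto labLk (leq_ltn_trans (leq0n k) k_lt).
by rewrite iterS (promotion_x0 labLk Lv1) (promotion_x1 labLk Lv1).
Qed.

Lemma bottom_delay_iter L k : labeling L -> k < #|P| ->
  bottom_delay (iprom k L x0) (iprom k L x1) = bottom_delay (L x0) (L x1) - k.
Proof.
move=> labL; elim: k => [|k IH] k_lt; first by rewrite subn0.
have [-> ->] := iter_promotion_bottom labL (ltnW k_lt).
rewrite bottom_delay_next; last exact: iprom_neq labL (ltnW (ltnW k_lt)).
by rewrite IH ?subnS // ltnW.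
Qed.

Lemma bottom_delay_le_of_linext L k : labeling L -> k < #|P| ->
  is_linext (iprom k L) -> bottom_delay (L x0) (L x1) <= k.
Proof.
move=> labL k_lt /(linext_bottom (iter_promotion_labeling labL (ltnW k_lt)).1).
by rewrite -bottom_delay_eq0 ?bottom_delay_iter ?subn_eq0 ?iprom_neq // ltnW.
Qed.

(* Only for [k >= #|P| - 3] does [linext_from] leave nothing but [x0] and [x1] to check. *)
Lemma linext_of_bottom_delay_le L k : labeling L -> #|P| - 3 <= k <= #|P| - 2 ->
  bottom_delay (L x0) (L x1) <= k -> is_linext (iprom k L).
Proof.
move=> labL /andP[k_ge k_le] delay_le; have k_lt : k < #|P| by have := card_gt1; lia.
have [labLk Lk] := iter_promotion_labeling labL (ltnW k_lt).
have /andP[/eqP Lx0 /eqP Lx1] : (iprom k L x0 == 0) && (iprom k L x1 == 1).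
  by rewrite -bottom_delay_eq0 ?bottom_delay_iter ?subn_eq0 ?iprom_neq // ltnW.
by apply: linext_of_bottom labLk _ Lx0 Lx1; apply: linext_from_le Lk; lia.
Qed.

Lemma quasi_tangled_delay L : labeling L ->
  quasi_tangled L = (bottom_delay (L x0) (L x1) == #|P| - 2).
Proof.
move=> labL; have n_gt1 := card_gt1; have pen_lt : #|P| - 2 < #|P| by lia.
rewrite /quasi_tangled /has_sorting_time; apply/andP/eqP => [[lin /forallP not_lin]|delay].
  apply/eqP; rewrite eqn_leq bottom_delay_le_of_linext //=.
  rewrite leqNgt; apply/negP => delay_lt.
  (* [set] merges convertible but syntactically distinct copies of [#|P|], which [lia] would
     treat as different atoms. *)
  have k_lt : #|P| - 3 < #|P| - 2 by move: delay_lt; set n := #|P|; lia.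
  by have := not_lin (Ordinal k_lt); rewrite linext_of_bottom_delay_le //=; lia.
split; first by apply: (linext_of_bottom_delay_le labL); rewrite ?delay; set n := #|P|; lia.
apply/forallP => j; apply/negP => lin_j.
have j_lt : j < #|P| by have := ltn_ord j; lia.
by have := bottom_delay_le_of_linext labL j_lt lin_j; rewrite delay leqNgt ltn_ord.
Qed.

Lemma quasi_tangled_bottom L : labeling L ->
  quasi_tangled L = (L x1 == #|P|.-1) || (L x0 == #|P| - 2).
Proof.
move=> labL; rewrite quasi_tangled_delay // /bottom_delay.
have := labL.2 x0; have := labL.2 x1; have : L x0 != L x1 by rewrite (inj_eq labL.1) eq_sym.
by have := card_gt1; set n := #|P|; case: (ltnP (L x0) (L x1)); lia.
Qed.

Lemma card_quasi_tangled :
  #|[set L : {ffun P -> 'I_#|P|} | injectiveb L && quasi_tangled (fun x => nat_of_ord (L x))]|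
  = 2 * (#|P| - 1)`! - (#|P| - 2)`!.
Proof.
have n_gt1 := card_gt1; have last_lt : #|P|.-1 < #|P| by lia.
have pen_lt : #|P| - 2 < #|P| by lia.
have -> : [set L : {ffun P -> 'I_#|P|} |
            injectiveb L && quasi_tangled (fun x => nat_of_ord (L x))]
    = inj_fiber x1 (Ordinal last_lt) :|: inj_fiber x0 (Ordinal pen_lt).
  apply/setP => L; rewrite !inE; case: (boolP (injectiveb L)) => //= /injectiveP injL.
  by rewrite quasi_tangled_bottom //; split=> [x y /val_inj/injL | x].
rewrite card_inj_fiberU // ?subn1 ?subn2 //.
by apply/eqP => /(congr1 val) /=; move: n_gt1; set n := #|P|; lia.
Qed.

End TwoBottom.

End Promotion.

Theorem mainTheorem8 (d : Order.disp_t) (P : finPOrderType d) (x0 : P)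
  (Hmin : forall y : P, minimal y <-> y = x0)
  (Hcov : #|[set y : P | covers x0 y]| = 1) :
  #|[set L : {ffun P -> 'I_#|P|} |
       injectiveb L && quasi_tangled (fun x => nat_of_ord (L x))]|
  = (2 * (#|P| - 1)`! - (#|P| - 2)`!)%N.
Proof.
have lt_x0 := unique_minimal_lt Hmin.
have [x1 covers_x0E] : exists x1, [set y : P | covers x0 y] = [set x1].
  by apply/cards1P; rewrite Hcov.
have cover_x1 z : covers x0 z -> z = x1 by move=> x0z; apply/set1P; rewrite -covers_x0E inE.
have : x1 \in [set y : P | covers x0 y] by rewrite covers_x0E set11.
rewrite inE => /andP[x0x1 _]; have x1_neq_x0 : x1 != x0 by rewrite gt_eqF.
exact: card_quasi_tangled lt_x0 (unique_cover_lt lt_x0 cover_x1) x1_neq_x0.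
Qed.
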